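(* Let $G$ be a graph with integer parameters $\nabla_0\ge\nabla_0(G)$ and $\nabla>\nabla_1^B(G)$, and let $\kappa=\max\{2\nabla_0,2\nabla\}$, $\lambda=1/\kappa$, $\mu=2\kappa^2$, $\nu=2\kappa^3$. For every $W\subseteq V(G)$ with $|W|\ge\mu$, the number of pseudo-covers of $W$ (with parameters $\kappa,\lambda,\mu,\nu$) is less than $\kappa^{2\kappa}$.
   Context: Graphs are finite, undirected and simple; $N[v]$ is the closed neighbourhood of $v$. $\nabla_0(G)=\max\{|E(H)|/|V(H)|: H\subseteq G\}$. A $1$-shallow minor of $G$ is a graph obtained from $G$ by deleting vertices and edges and contracting pairwise vertex-disjoint connected subgraphs of radius at most $1$; $\nabla_1^B(G)$ is the maximum edge density of a bipartite $1$-shallow minor of $G$. A vertex $z$ is $\lambda$-strong for a set $W'$ if $|N[z]\cap W'|\ge\lambda|W'|$. A pseudo-cover of $W$ with parameters $\kappa,\lambda,\mu,\nu$ is a sequence $(v_1,\ldots,v_m)$ of vertices such that $m\le\kappa$; for every $i\le m$, $v_i$ is $\lambda$-strong for $W\setminus\bigcup_{j<i}N[v_j]$ and $|N[v_i]\cap(W\setminus\bigcup_{j<i}N[v_j])|\ge\mu$; and $|W\setminus\bigcup_{j\le m}N[v_j]|\le\nu$. *)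

From HB Require Import structures.
From mathcomp Require Import all_boot all_order all_algebra.
Set Implicit Arguments. Unset Strict Implicit. Unset Printing Implicit Defensive.
Import Order.TTheory GRing.Theory Num.Theory.

Section Graphs.
Variables (T : finType) (e : rel T).

Definition simple_graph := symmetric e /\ irreflexive e.

Definition cnbh (v : T) : {set T} := [set u | (u == v) || e v u].

Definition edges : {set {set T}} := [set [set x; y] | x in T, y in T & e x y].

Definition is_subgraph (S : {set T}) (F : {set {set T}}) : Prop :=
  F \subset edges /\ (forall f, f \in F -> f \subset S).

(* "nabla0 >= nabla_0(G)" : every (nonempty) subgraph has edge density <= nabla0 *)
Definition nabla0_bound (nabla0 : nat) : Prop :=
  forall S F, is_subgraph S F -> (0 < #|S|)%N ->
    ((#|F|%:R / #|S|%:R : rat) <= nabla0%:R)%R.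

(* Branch sets B : 'I_k -> {set T} of a 1-shallow minor: nonempty, pairwise
   disjoint, each spanning a connected subgraph of radius <= 1 (i.e. with a
   centre adjacent to all its other vertices). *)
Definition shallow1_branch_sets (k : nat) (B : 'I_k -> {set T}) : Prop :=
  (forall i j, i != j -> [disjoint B i & B j]) /\
  (forall i, exists2 c, c \in B i & forall x, x \in B i -> (x == c) || e c x).

Definition is_shallow1_minor (k : nat) (B : 'I_k -> {set T})
    (F : {set {set 'I_k}}) : Prop :=
  shallow1_branch_sets B /\
  (forall f, f \in F -> exists i j, [/\ f = [set i; j], i != j &
       exists x y, [/\ x \in B i, y \in B j & e x y]]).

Definition bipartite (k : nat) (F : {set {set 'I_k}}) : Prop :=
  exists col : 'I_k -> bool, forall i j, [set i; j] \in F -> col i != col j.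

(* "nabla > nabla_1^B(G)" : every bipartite 1-shallow minor has density < nabla *)
Definition nabla1B_strict_bound (nabla : nat) : Prop :=
  forall k (B : 'I_k -> {set T}) (F : {set {set 'I_k}}),
    is_shallow1_minor B F -> bipartite F -> (0 < k)%N ->
    ((#|F|%:R / k%:R : rat) < nabla%:R)%R.

Definition lstrong (lam : rat) (z : T) (W' : {set T}) : bool :=
  (lam * #|W'|%:R <= #|cnbh z :&: W'|%:R)%R.

(* the per-step conditions of a pseudo-cover, R = currently uncovered part of W *)
Fixpoint pc_steps (lam : rat) (mu : nat) (R : {set T}) (s : seq T) : bool :=
  if s is v :: s' then
    [&& lstrong lam v R, (mu <= #|cnbh v :&: R|)%N & pc_steps lam mu (R :\: cnbh v) s']
  else true.

Definition pseudo_cover (kappa : nat) (lam : rat) (mu nu : nat)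
    (W : {set T}) (s : seq T) : bool :=
  [&& (size s <= kappa)%N, pc_steps lam mu W s &
      (#|W :\: \bigcup_(v <- s) cnbh v| <= nu)%N].

(* number of pseudo-covers (they all have length <= kappa) *)
Definition num_pseudo_covers (kappa : nat) (lam : rat) (mu nu : nat)
    (W : {set T}) : nat :=
  \sum_(m < kappa.+1) #|[pred t : m.-tuple T | pseudo_cover kappa lam mu nu W t]|.

End Graphs.

From HB Require Import structures.
From mathcomp Require Import all_boot all_order all_algebra zify.
Import Order.TTheory GRing.Theory Num.Theory.
Set Implicit Arguments. Unset Strict Implicit.

(* Call v a candidate for R if it is (1/kappa)-strong for R and covers at least
   2 kappa^2 vertices of R; every step of a pseudo-cover picks a candidate for
   the still uncovered part R of W.  There are fewer than kappa^2 candidates: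
   summing |N[z] ∩ R| over the candidate set Z counts each z once, the arcs
   inside Z (at most 2 nabla0 |Z| by the density bound) and the arcs from Z to
   R \ Z (fewer than nabla |Z ∪ R|, as they form a bipartite 1-shallow minor
   with singleton branch sets), while each summand is at least
   (|R| + 2 kappa^3) / (2 kappa); for |Z| >= kappa^2 these are incompatible.
   Hence at most (kappa^2 - 1)^m pseudo-covers have length m, and the sum over
   m <= kappa stays below kappa^(2 kappa). *)

Lemma sum_expn_le (K n : nat) : \sum_(m < n.+1) K ^ m <= K.+1 ^ n.
Proof.
elim: n => [|n IHn]; first by rewrite big_ord_recr big_ord0.
rewrite big_ord_recr /= [K.+1 ^ n.+1]expnS mulSn expnS leq_add //.
by rewrite leq_mul2l (leq_trans _ IHn) ?orbT // big_ord_recr leq_addl.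
Qed.

Lemma sum_expn_lt (K n : nat) :
  0 < K -> 1 < n -> \sum_(m < n.+1) K ^ m < K.+1 ^ n.
Proof.
case: n => [|[|n]] // K_gt0 _.
rewrite big_ord_recr /= [K.+1 ^ n.+2]expnS mulSn [K ^ n.+2]expnS -addnS.
apply: leq_add; first exact: sum_expn_le.
by rewrite ltn_mul2l K_gt0 /= ltn_exp2r.
Qed.

Lemma card_dep_pairs (U V : finType) (A : {set U}) (Q : U -> V -> bool) :
  #|[set p : U * V | (p.1 \in A) && Q p.1 p.2]| = \sum_(x in A) #|[set y | Q x y]|.
Proof.
rewrite (eq_bigr (fun x => \sum_(y | Q x y) 1)) => [|x _].
  by rewrite pair_big_dep -sum1_card; apply: eq_bigl => p; rewrite !inE.
by rewrite sum1_card cardsE.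
Qed.

Lemma eq_set2_cases (U : finType) (a b c d : U) :
  [set a; b] = [set c; d] -> (a = c /\ b = d) \/ (a = d /\ b = c).
Proof.
move=> eq_ab_cd.
have: c \in [set a; b] /\ d \in [set a; b] by rewrite eq_ab_cd set21 set22.
have: a \in [set c; d] /\ b \in [set c; d] by rewrite -eq_ab_cd set21 set22.
rewrite !in_set2 => -[/orP[]/eqP ac /orP[]/eqP bd] [/orP[]/eqP ca /orP[]/eqP db].
all: subst; by [left | right].
Qed.

Section Arcs.
Variables (T : finType) (e : rel T).

Definition arcs (X Y : {set T}) : {set T * T} :=
  [set p | [&& p.1 \in X, p.2 \in Y & e p.1 p.2]].

Lemma card_arcs (X Y : {set T}) :
  #|arcs X Y| = \sum_(x in X) #|[set y in Y | e x y]|.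
Proof. exact: (card_dep_pairs X (fun x y => (y \in Y) && e x y)). Qed.

Lemma card_arcs_le (nabla0 : nat) (X : {set T}) :
  nabla0_bound e nabla0 -> #|arcs X X| <= 2 * nabla0 * #|X|.
Proof.
move=> nabla0_e.
have [X0|X_gt0] := posnP #|X|.
  by move/card0_eq: X0 => X0; rewrite card_arcs big_pred0.
pose F := (fun p : T * T => [set p.1; p.2]) @: arcs X X.
have F_sub : is_subgraph e X F.
  split.
    apply/subsetP => f /imsetP[p]; rewrite inE => /and3P[_ _ ep] ->.
    by apply/imset2P; exists p.1 p.2; rewrite ?inE.
  move=> f /imsetP[p]; rewrite inE => /and3P[p1X p2X _] ->.
  by apply/subsetP => y /set2P[]->.
have F_le : #|F| <= nabla0 * #|X|.
  by have := nabla0_e _ _ F_sub X_gt0; rewrite ler_pdivrMr ?ltr0n // -natrM ler_nat.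
pose g (p : T * T) := ([set p.1; p.2], enum_rank p.1 < enum_rank p.2).
have g_inj : {in arcs X X &, injective g}.
  move=> [a b] [c d] _ _ [/eq_set2_cases[[-> ->] // | [-> ->]]] /=.
  by case: (ltngtP (enum_rank c) (enum_rank d)) => // /ord_inj/enum_rank_inj ->.
have gX_sub : g @: arcs X X \subset setX F [set: bool].
  apply/subsetP => _ /imsetP[p pX ->]; rewrite inE /= in_setT andbT; exact: imset_f.
rewrite -(card_in_imset g_inj); apply: leq_trans (subset_leq_card gX_sub) _.
by rewrite cardsX cardsT card_bool mulnC -mulnA leq_mul2l F_le orbT.
Qed.

Lemma singleton_shallow1_branch_sets (k : nat) (f : 'I_k -> T) :
  injective f -> shallow1_branch_sets e (fun i => [set f i]).
Proof.
move=> f_inj; split=> [i j ij | i].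
  by rewrite /= disjoints1 inE (inj_eq f_inj).
by exists (f i); rewrite ?inE // => x; rewrite inE => ->.
Qed.

Lemma card_cross_arcs_lt (nabla : nat) (X Y : {set T}) :
  nabla1B_strict_bound e nabla -> [disjoint X & Y] -> 0 < #|X :|: Y| ->
  #|arcs X Y| < nabla * #|X :|: Y|.
Proof.
move=> nabla_e XY S_gt0; set S := X :|: Y.
have [s0 s0S] := card_gt0P S_gt0.
pose rk := enum_rank_in s0S.
have rkK : {in S, cancel rk enum_val} := enum_rankK_in s0S.
have arcsP p : p \in arcs X Y -> [/\ p.1 \in S, p.2 \in S, p.1 \in X & p.2 \in Y].
  by rewrite inE => /and3P[p1X p2Y _]; rewrite !inE p1X p2Y orbT.
have YnX y : y \in Y -> y \in X = false by move=> yY; rewrite (disjointFl XY yY).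
pose F := (fun p : T * T => [set rk p.1; rk p.2]) @: arcs X Y.
have F_card : #|F| = #|arcs X Y|.
  apply: card_in_imset => -[p1 p2] [q1 q2] /arcsP[/= p1S p2S p1X _] /arcsP[/= q1S q2S _ q2Y].
  case/eq_set2_cases => -[/(congr1 enum_val) E1 /(congr1 enum_val) E2].
    by rewrite !rkK // in E1 E2; rewrite E1 E2.
  by rewrite !rkK // in E1; rewrite E1 YnX in p1X.
have F_minor : is_shallow1_minor e (fun i => [set enum_val i]) F.
  split; first exact/singleton_shallow1_branch_sets/enum_val_inj.
  move=> _ /imsetP[p pXY ->]; have [p1S p2S p1X p2Y] := arcsP p pXY.
  exists (rk p.1), (rk p.2); split=> //.
    by apply: contraTneq p1X => /(congr1 enum_val); rewrite !rkK // => ->; rewrite YnX.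
  exists p.1, p.2; rewrite !inE !rkK ?eqxx //.
  by move: pXY; rewrite inE => /and3P[].
have F_bip : bipartite F.
  exists (fun i => enum_val i \in X) => i j /imsetP[p /arcsP[p1S p2S p1X p2Y]].
  by case/eq_set2_cases=> -[-> ->]; rewrite !rkK // p1X (YnX _ p2Y).
have := nabla_e _ _ _ F_minor F_bip S_gt0.
by rewrite ltr_pdivrMr ?ltr0n // -natrM ltr_nat F_card.
Qed.

Lemma sum_cnbh_le (Z R : {set T}) :
  \sum_(z in Z) #|cnbh e z :&: R| <= #|Z| + #|arcs Z Z| + #|arcs Z (R :\: Z)|.
Proof.
rewrite !card_arcs -sum1_card -!big_split /=; apply: leq_sum => z _.
set A := [set y in Z | e z y]; set B := [set y in R :\: Z | e z y].
have N_sub : cnbh e z :&: R \subset [set z] :|: (A :|: B).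
  apply/subsetP => y; rewrite !inE => /andP[/orP[-> // | zy] yR].
  by rewrite zy yR !andbT; case: (y \in Z); rewrite ?orbT.
apply: leq_trans (subset_leq_card N_sub) _.
apply: leq_trans (leq_card_setU _ _) _.
by rewrite cards1 -addnA leq_add2l leq_card_setU.
Qed.

Section Candidates.
Variables (lam : rat) (mu : nat).

Definition pc_candidates (R : {set T}) : {set T} :=
  [set v | lstrong e lam v R && (mu <= #|cnbh e v :&: R|)].

Lemma card_pc_steps (K m : nat) (R : {set T}) :
  (forall R, #|pc_candidates R| <= K) ->
  #|[set t : m.-tuple T | pc_steps e lam mu R t]| <= K ^ m.
Proof.
move=> cand_le; elim: m R => [|m IHm] R.
  by rewrite (leq_trans (max_card _)) // card_tuple.
pose split_tuple (t : m.+1.-tuple T) := (thead t, [tuple of behead t]).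
have split_inj : injective split_tuple.
  move=> t u [Et Eu]; rewrite (tuple_eta t) (tuple_eta u).
  by apply: val_inj => /=; rewrite Et Eu.
pose S := [set p : T * m.-tuple T |
  (p.1 \in pc_candidates R) && pc_steps e lam mu (R :\: cnbh e p.1) p.2].
have split_sub : split_tuple @: [set t : m.+1.-tuple T | pc_steps e lam mu R t] \subset S.
  apply/subsetP => p /imsetP[t]; rewrite [t]tuple_eta !inE /=.
  by move=> /and3P[t_strong t_mu t_steps] ->; rewrite t_strong t_mu t_steps.
rewrite -(card_imset _ split_inj); apply: leq_trans (subset_leq_card split_sub) _.
rewrite (card_dep_pairs _ (fun x (t : m.-tuple T) => pc_steps e lam mu (R :\: cnbh e x) t)).
apply: (@leq_trans (\sum_(x in pc_candidates R) K ^ m)); first exact: leq_sum.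
by rewrite sum_nat_const expnS leq_mul2r cand_le orbT.
Qed.

End Candidates.

Lemma lstrong_inv (k : nat) (z : T) (R : {set T}) :
  0 < k -> lstrong e (1 / k%:R) z R = (#|R| <= k * #|cnbh e z :&: R|).
Proof.
by move=> k_gt0; rewrite /lstrong mul1r mulrC ler_pdivrMr ?ltr0n // -natrM ler_nat mulnC.
Qed.

Lemma card_pc_candidates_lt (nabla0 nabla kappa : nat) (R : {set T}) :
  nabla0_bound e nabla0 -> nabla1B_strict_bound e nabla ->
  2 * nabla0 <= kappa -> 2 * nabla <= kappa -> 2 <= kappa ->
  #|pc_candidates (1 / kappa%:R) (2 * kappa ^ 2) R| < kappa ^ 2.
Proof.
move=> nabla0_e nabla_e k_nabla0 k_nabla k_ge2.
set Z := pc_candidates _ _ R; set n := #|Z|; set r := #|R|.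
have [n0|n_gt0] := posnP n; first by rewrite n0 expn_gt0; lia.
have d_ge : n * (r + 2 * kappa ^ 3) <= 2 * kappa * \sum_(z in Z) #|cnbh e z :&: R|.
  rewrite -sum_nat_const big_distrr /=; apply: leq_sum => z.
  by rewrite inE lstrong_inv; [move=> /andP[]; nia | lia].
have d_le := sum_cnbh_le Z R.
have inner_le : #|arcs Z Z| <= kappa * n.
  by rewrite (leq_trans (card_arcs_le Z nabla0_e)) // leq_mul2r k_nabla0 orbT.
have cross_lt : #|arcs Z (R :\: Z)| < nabla * #|Z :|: (R :\: Z)|.
  apply: card_cross_arcs_lt; first exact: nabla_e.
    by rewrite disjoints_subset; apply/subsetP => x; rewrite !inE => ->.
  by rewrite (leq_trans n_gt0) // subset_leq_card // subsetUl.
have S_le : #|Z :|: (R :\: Z)| <= n + r.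
  by rewrite (leq_trans (leq_card_setU _ _)) // leq_add2l subset_leq_card // subsetDl.
have cross_le : 2 * #|arcs Z (R :\: Z)| < kappa * (n + r).
  by rewrite (leq_trans _ (leq_mul k_nabla S_le)) // -mulnA ltn_mul2l.
have key : n * (r + 2 * kappa ^ 3) < 2 * kappa * n + 2 * kappa ^ 2 * n + kappa ^ 2 * (n + r).
  by nia.
rewrite ltnNge; apply/negP => n_ge.
have : kappa ^ 2 * r <= n * r by rewrite leq_mul2r n_ge orbT.
nia.
Qed.

End Arcs.

Theorem lemma7 (T : finType) (e : rel T) (nabla0 nabla : nat) :
  simple_graph e ->
  (0 < nabla)%N ->
  nabla0_bound e nabla0 ->
  nabla1B_strict_bound e nabla ->
  let kappa := maxn (2 * nabla0) (2 * nabla) in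
  let lam : rat := (1 / kappa%:R)%R in
  let mu := 2 * kappa ^ 2 in
  let nu := 2 * kappa ^ 3 in
  forall W : {set T}, (mu <= #|W|)%N ->
    (num_pseudo_covers e kappa lam mu nu W < kappa ^ (2 * kappa))%N.
Proof.
move=> _ nabla_gt0 nabla0_e nabla_e kappa lam mu nu W _.
have k_ge2 : 2 <= kappa by rewrite /kappa; lia.
set K := (kappa ^ 2).-1.
have K_succ : K.+1 = kappa ^ 2 by rewrite prednK // expn_gt0 (ltn_trans _ k_ge2).
have K_gt0 : 0 < K by rewrite -ltnS K_succ; nia.
have cand_le R : #|pc_candidates e lam mu R| <= K.
  by rewrite -ltnS K_succ (card_pc_candidates_lt _ nabla0_e nabla_e) // /kappa; lia.
apply: (@leq_ltn_trans (\sum_(m < kappa.+1) K ^ m)).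
  apply: leq_sum => m _; apply: leq_trans (card_pc_steps m W cand_le).
  by apply/subset_leq_card/subsetP => t; rewrite !inE => /and3P[].
by rewrite expnM -K_succ sum_expn_lt.
Qed.
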